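(* Let $G_1,G_2,\dots$ be i.i.d. $N(0,1)$ random variables and $\{\alpha_{jk}:j,k\ge1\}$ deterministic real numbers such that $\sum_{j,k=1}^{2n}\alpha_{jk}G_jG_k\to Z$ in probability as $n\to\infty$ for some finite random variable $Z$. If $\alpha_{11}\ne0$, then $Z$ has a continuous distribution, i.e. $P(Z=z)=0$ for every $z\in\mathbb R$. *)

From HB Require Import structures.
From mathcomp Require Import all_boot all_order all_algebra.
From mathcomp Require Import all_classical all_reals all_analysis.
Set Implicit Arguments. Unset Strict Implicit. Unset Printing Implicit Defensive.
Import Order.TTheory GRing.Theory Num.Theory.
Import numFieldNormedType.Exports.
Local Open Scope classical_set_scope.
Local Open Scope ring_scope.

Definition mutually_independent_seq {d} {T : measurableType d} {R : realType}
  (P : probability T R) (G : nat -> T -> R) : Prop :=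
  forall (s : seq nat) (B : nat -> set R),
    uniq s -> (forall i, measurable (B i)) ->
    P (\big[setI/setT]_(i <- s) (G i @^-1` B i)) =
    (\prod_(i <- s) P (G i @^-1` B i))%E.

Definition standard_normal {d} {T : measurableType d} {R : realType}
  (P : probability T R) (X : T -> R) : Prop :=
  forall A : set R, measurable A -> P (X @^-1` A) = normal_prob 0 1 A.

Definition cvg_in_probability {d} {T : measurableType d} {R : realType}
  (P : probability T R) (X : nat -> T -> R) (Z : T -> R) : Prop :=
  forall eps : R, 0 < eps ->
    (fun n => P [set w | eps <= `|X n w - Z w|]) @ \oo --> 0%E.

(* Partial quadratic form sum_{j,k=1}^{2n} alpha_{jk} G_j G_k,
   with 0-based indices (Rocq index j stands for the paper's j+1). *)
Definition quad_partial {T : Type} {R : realType}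
  (alpha : nat -> nat -> R) (G : nat -> T -> R) (n : nat) : T -> R :=
  fun w => \sum_(j < 2 * n) \sum_(k < 2 * n) alpha j k * G j w * G k w.

From HB Require Import structures.
From mathcomp Require Import all_boot all_order all_algebra.
From mathcomp Require Import all_classical all_reals all_analysis.
From mathcomp Require Import measurable_realfun ring lra.
Import Order.TTheory GRing.Theory Num.Theory.
Import numFieldNormedType.Exports.
Local Open Scope classical_set_scope.
Local Open Scope ring_scope.

(* Write the quadratic form as a G_0^2 + B G_0 + C, with a = alpha 0 0 != 0
   and B, C functions of the other variables.  If |Q - z| < eps then G_0 lies
   within the union of two intervals of total length O(sqrt (eps / |a|))
   around the roots of a t^2 + B t + C - z, an event of Gaussian probability
   O(sqrt eps) whatever B and C are.  Independence being only available for
   rectangles, the other variables are frozen on a grid of mesh h over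
   [-M, M), fine enough for the quadratic form to move by at most eps.
   Summing over the grid cells, and adding the probabilities that some G_j
   leaves [-M, M) and that |Q_n - Z| >= eps, bounds P(Z = z) by an arbitrarily
   small quantity. *)

Section near_roots.
Context {R : realType}.

Lemma sqrtrD_subr_le (x y : R) : 0 <= y -> Num.sqrt (x + y) - Num.sqrt x <= Num.sqrt y.
Proof.
move=> y0; have [x0|x0] := lerP x 0.
  by rewrite (ler0_sqrtr x0) subr0; apply: ler_wsqrtr; lra.
rewrite lerBlDl -[leRHS]ger0_norm ?addr_ge0 ?sqrtr_ge0 // -sqrtr_sqr.
rewrite ler_sqrt ?sqr_ge0 // sqrrD !sqr_sqrtr ?(ltW x0) //.
have : 0 <= Num.sqrt x * Num.sqrt y *+ 2 by rewrite mulrn_wge0 // mulr_ge0 ?sqrtr_ge0.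
lra.
Qed.

(* Since [a t^2 + b t + c = a ((t - r)^2 + q)], the inequality
   [|a t^2 + b t + c| < e] confines [|t - r|] to [[s1, s2]]. *)
Definition near_roots (a b c e : R) : set R :=
  let r := - b / (2 * a) in
  let q := c / a - r ^+ 2 in
  let s1 := Num.sqrt (- q - e / `|a|) in
  let s2 := Num.sqrt (- q + e / `|a|) in
  `[r - s2, r - s1]%classic `|` `[r + s1, r + s2]%classic.

Lemma measurable_near_roots (a b c e : R) : measurable (near_roots a b c e).
Proof. by apply: measurableU; apply: measurable_itv. Qed.

Lemma near_rootsP (a b c e t : R) :
  a != 0 -> `|a * t ^+ 2 + b * t + c| < e -> near_roots a b c e t.
Proof.
rewrite /near_roots /=; set r := - b / (2 * a); set q := c / a - r ^+ 2 => a0.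
have -> : a * t ^+ 2 + b * t + c = a * ((t - r) ^+ 2 + q) by rewrite /q /r; field.
rewrite normrM -ltr_pdivlMl ?normr_gt0 // mulrC ltr_norml => /andP[lo hi].
have s1 : Num.sqrt (- q - e / `|a|) <= `|t - r|.
  by rewrite -(sqrtr_sqr (t - r)); apply: ler_wsqrtr; lra.
have s2 : `|t - r| <= Num.sqrt (- q + e / `|a|).
  by rewrite -(sqrtr_sqr (t - r)); apply: ler_wsqrtr; lra.
have [tr|tr] := lerP 0 (t - r); [right|left]; rewrite /= in_itv /=.
  by rewrite (ger0_norm tr) in s1 s2; apply/andP; split; lra.
by rewrite (ltr0_norm tr) in s1 s2; apply/andP; split; lra.
Qed.

Lemma normal_prob_itv_le (m s u v : R) : s != 0 -> u <= v ->
  (normal_prob m s `[u, v]%classic <= (normal_peak s * (v - u))%:E)%E.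
Proof.
move=> s0 uv; rewrite /normal_prob.
apply: (@le_trans _ _ (\int[lebesgue_measure]_(x in `[u, v]%classic) (normal_peak s)%:E)%E).
  apply: ge0_le_integral => //=.
  - by move=> x _; rewrite lee_fin normal_pdf_ge0.
  - by apply/measurable_EFinP; apply: measurable_funTS; exact: measurable_normal_pdf.
  - by move=> x _; rewrite lee_fin normal_pdf_ub.
rewrite integral_cst //= lebesgue_measure_itv /= lte_fin.
case: ltP => [_|vu]; first by rewrite -EFinD -EFinM.
by rewrite (@le_anti _ _ v u) ?uv ?vu // subrr mulr0 mule0.
Qed.

Definition near_roots_bound (s a e : R) := 2 * normal_peak s * Num.sqrt (2 * e / `|a|).

Lemma normal_prob_near_roots (m s a b c e : R) : s != 0 -> a != 0 -> 0 < e ->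
  (normal_prob m s (near_roots a b c e) <= (near_roots_bound s a e)%:E)%E.
Proof.
rewrite /near_roots /= => s0 a0 e0.
set q := c / a - _; set r := - b / (2 * a).
have ea0 : 0 <= e / `|a| by rewrite divr_ge0 // ltW.
have s12 : Num.sqrt (- q - e / `|a|) <= Num.sqrt (- q + e / `|a|).
  by apply: ler_wsqrtr; lra.
have width : Num.sqrt (- q + e / `|a|) - Num.sqrt (- q - e / `|a|) <=
    Num.sqrt (2 * e / `|a|).
  have := @sqrtrD_subr_le (- q - e / `|a|) (2 * e / `|a|).
  have -> : - q - e / `|a| + 2 * e / `|a| = - q + e / `|a| by rewrite -mulrA; lra.
  by apply; rewrite -mulrA mulr_ge0.
have pk0 := normal_peak_ge0 s.
apply: le_trans (measureU2 _ _ _) _; rewrite ?measurable_itv //.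
have -> : near_roots_bound s a e =
    normal_peak s * Num.sqrt (2 * e / `|a|) + normal_peak s * Num.sqrt (2 * e / `|a|).
  by rewrite /near_roots_bound; ring.
rewrite EFinD; apply: leeD; (apply: (le_trans (normal_prob_itv_le m s _ _ s0 _));
  [lra | rewrite lee_fin ler_wpM2l //; lra]).
Qed.

Lemma near_roots_bound_small (s : R) {a eta : R} : a != 0 -> 0 < eta ->
  exists2 e, 0 < e & near_roots_bound s a (2 * e) <= eta.
Proof.
move=> a0 eta0; have pk0 := normal_peak_ge0 s.
pose c := eta / (2 * normal_peak s + 1).
have c0 : 0 < c by rewrite divr_gt0 //; lra.
have a_gt0 : 0 < `|a| by rewrite normr_gt0.
exists (`|a| * c ^+ 2 / 4); first by rewrite divr_gt0 // mulr_gt0 // exprn_gt0.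
rewrite /near_roots_bound.
have -> : 2 * (2 * (`|a| * c ^+ 2 / 4)) / `|a| = c ^+ 2 by field; rewrite gt_eqF.
rewrite sqrtr_sqr gtr0_norm //.
have : c * (2 * normal_peak s + 1) = eta by rewrite divfK // gt_eqF //; lra.
lra.
Qed.

End near_roots.

Section quad_form.
Context {R : comPzRingType}.
Implicit Types (alpha : nat -> nat -> R) (v : nat -> R).

Definition quad_form alpha (m : nat) v : R :=
  \sum_(j < m) \sum_(k < m) alpha j k * v j * v k.

Definition cross_coef alpha (m : nat) v : R :=
  \sum_(k < m) (alpha 0%N k.+1 + alpha k.+1 0%N) * v k.

Lemma quad_form_recl alpha m v : quad_form alpha m.+1 v =
  alpha 0%N 0%N * v 0%N ^+ 2 + cross_coef alpha m (fun j => v j.+1) * v 0%N +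
  quad_form (fun j k => alpha j.+1 k.+1) m (fun j => v j.+1).
Proof.
rewrite /quad_form /cross_coef big_ord_recl /= big_ord_recl /=.
under [in X in _ + X]eq_bigr do rewrite big_ord_recl /=.
rewrite big_split /= mulr_suml -!addrA; congr (_ + _); first by rewrite expr2 mulrA.
rewrite addrA -big_split /=; congr (_ + _); apply: eq_bigr => i _.
rewrite /bump /=; ring.
Qed.

End quad_form.

Lemma quad_form_dist_le (R : realDomainType) (alpha : nat -> nat -> R) m
    (u v : nat -> R) (M h : R) :
  (forall j, (j < m)%N -> [/\ `|u j| <= M, `|v j| <= M & `|u j - v j| <= h]) ->
  `|quad_form alpha m u - quad_form alpha m v| <=
    2 * M * h * \sum_(j < m) \sum_(k < m) `|alpha j k|.
Proof.
move=> uv; rewrite /quad_form -sumrB mulr_sumr.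
apply: (le_trans (ler_norm_sum _ _ _)); apply: ler_sum => j _.
rewrite -sumrB mulr_sumr.
apply: (le_trans (ler_norm_sum _ _ _)); apply: ler_sum => k _.
have [uj vj dj] := uv j (ltn_ord j); have [uk vk dk] := uv k (ltn_ord k).
have -> : alpha j k * u j * u k - alpha j k * v j * v k =
    alpha j k * (u j * (u k - v k) + (u j - v j) * v k) by ring.
rewrite normrM mulrC ler_wpM2r //.
apply: (le_trans (ler_normD _ _)); rewrite !normrM.
have e1 : `|u j| * `|u k - v k| <= M * h by apply: ler_pM.
have e2 : `|u j - v j| * `|v k| <= h * M by apply: ler_pM.
lra.
Qed.

Section tails.
Context {R : realType}.

Lemma measurable_normr_ge (r : R) : measurable [set x : R | r <= `|x|].
Proof.
have -> : [set x : R | r <= `|x|] = (fun x => `|x|) @^-1` `[r, +oo[%classic.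
  by apply/seteqP; split => x /=; rewrite in_itv /= andbT.
by rewrite -[X in measurable X]setTI; apply: normr_measurable => //; exact: measurable_itv.
Qed.

Lemma cvge0_near_le {u : nat -> \bar R} {e : R} : 0 < e ->
  u @ \oo --> 0%E -> \forall n \near \oo, (u n <= e%:E)%E.
Proof.
move=> e0 /fine_cvgP[finu /cvgrPdist_lt/(_ e e0) ue].
near=> n.
have fn : u n \is a fin_num by near: n; exact: finu.
have : `|0 - fine (u n)| < e by near: n; exact: ue.
by rewrite -(fineK fn) lee_fin sub0r normrN ltr_norml => /andP[_ /ltW].
Unshelve. all: end_near.
Qed.

Lemma probability_tail_le (mu : probability (measurableTypeR R) R) (e : R) : 0 < e ->
  exists2 M : R, 0 < M & (mu [set x : R | (M <= `|x|)%R] <= e%:E)%E.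
Proof.
move=> e0; pose F (n : nat) := [set x : R | n.+1%:R <= `|x|].
have mF n : measurable (F n) by apply: measurable_normr_ge.
have capF : \bigcap_n F n = set0.
  apply/seteqP; split => x // Fx.
  have /andP[_] := truncn_itv (normr_ge0 x).
  by have := Fx (Num.truncn `|x|) I; rewrite /F /=; lra.
have Fdecr : {homo F : n k / (n <= k)%N >-> (k <= n)%O}.
  by move=> n k nk; rewrite subsetEset => x /=; apply: le_trans; rewrite ler_nat.
have /(cvge0_near_le e0)[N _ /(_ N (leqnn N)) HN] : (mu \o F) @ \oo --> 0%E.
  rewrite -(measure0 mu) -capF; apply: nonincreasing_cvg_mu => //.
    by rewrite (le_lt_trans (probability_le1 mu (mF 0%N))) ?ltry.
  by rewrite capF.
by exists N.+1%:R; rewrite ?ltr0n.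
Qed.

End tails.

Section cells.
Context {R : realType}.

Definition cell (M h : R) (i : nat) : set R :=
  `[- M + i%:R * h, - M + i.+1%:R * h[%classic.

Lemma cellP (M h x : R) i :
  cell M h i x <-> - M + i%:R * h <= x /\ x < - M + i.+1%:R * h.
Proof. by rewrite /cell /= in_itv /=; split => [/andP//|/andP]. Qed.

Lemma trivIset_cell (M h : R) : 0 <= h -> trivIset setT (cell M h).
Proof.
move=> h0; apply/trivIsetP => i k _ _.
wlog ik : i k / (i < k)%N => [wlogH|_].
  by rewrite neq_ltn => /orP[ik|ki]; [|rewrite setIC]; apply: wlogH; rewrite // ltn_eqF.
apply/seteqP; split => x // [/cellP[_ xi] /cellP[xk _]].
have : i.+1%:R * h <= k%:R * h by rewrite ler_wpM2r // ler_nat.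
lra.
Qed.

Lemma cell_truncn (M h x : R) (N : nat) : 0 < h -> `|x| < M -> N.+1%:R * h = 2 * M ->
  (Num.truncn ((x + M) / h) < N.+1)%N /\ cell M h (Num.truncn ((x + M) / h)) x.
Proof.
move=> h0 /[!ltr_norml] /andP[xlo xhi] hN.
have /truncn_itv/andP[t1 t2] : 0 <= (x + M) / h by rewrite divr_ge0 ?(ltW h0) //; lra.
set i := Num.truncn _ in t1 t2 *.
have xh : (x + M) / h * h = x + M by rewrite divfK // gt_eqF.
split.
  rewrite -(ltr_nat R); apply: le_lt_trans t1 _.
  by rewrite ltr_pdivrMr // hN; lra.
have a1 : i%:R * h <= x + M by rewrite -xh ler_wpM2r // ltW.
have a2 : x + M < i.+1%:R * h by rewrite -xh ltr_pM2r // t2.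
by apply/cellP; lra.
Qed.

Lemma cell_approx (M h x : R) i : 0 <= h -> `|x| < M -> cell M h i x ->
  `|- M + i%:R * h| <= M /\ `|x - (- M + i%:R * h)| <= h.
Proof.
move=> h0 /[!ltr_norml] /andP[xlo xhi] /cellP[c1 c2].
have ih : 0 <= i%:R * h by rewrite mulr_ge0 ?ler0n.
rewrite -natr1 mulrDl mul1r in c2.
by split; rewrite ler_norml; apply/andP; split; lra.
Qed.

Lemma grid_mesh (M A eps : R) : 0 < M -> 0 <= A -> 0 < eps ->
  exists (N : nat) (h : R), [/\ 0 < h, N.+1%:R * h = 2 * M & 2 * M * h * A <= eps].
Proof.
move=> M0 A0 eps0; pose N := Num.truncn (4 * M ^+ 2 * A / eps).
have N0 : 0 < N.+1%:R :> R by rewrite ltr0n.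
exists N, (2 * M / N.+1%:R); split.
- by rewrite divr_gt0 // mulr_gt0.
- by rewrite mulrC divfK // gt_eqF.
have /truncn_itv/andP[_] : 0 <= 4 * M ^+ 2 * A / eps.
  by rewrite divr_ge0 ?mulr_ge0 ?exprn_ge0 ?(ltW M0) ?(ltW eps0).
rewrite -/N ltr_pdivrMr // => NA.
have -> : 2 * M * (2 * M / N.+1%:R) * A = 4 * M ^+ 2 * A / N.+1%:R.
  by field; rewrite gt_eqF.
by rewrite ler_pdivrMr //; lra.
Qed.

End cells.

Lemma measure_bigsetU_le {d} {T : measurableType d} {R : realType}
    (mu : {measure set T -> \bar R}) {I : Type} (s : seq I) (F : I -> set T) :
  (forall i, measurable (F i)) ->
  (mu (\big[setU/set0]_(i <- s) F i) <= \sum_(i <- s) mu (F i))%E.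
Proof.
move=> mF; elim: s => [|x s IH]; first by rewrite !big_nil measure0.
rewrite !big_cons; apply: le_trans (measureU2 _ _ _) _ => //.
  exact: bigsetU_measurable.
by apply: leeD.
Qed.

Section independent_normals.
Context {d : measure_display} {T : measurableType d} {R : realType}
  (P : probability T R).

Lemma probability_fineE {A : set T} : measurable A -> P A = (fine (P A))%:E.
Proof. by move=> mA; rewrite fineK // fin_num_measure. Qed.

Lemma sum_prob_cell_le1 (X : {RV P >-> R}) (M h : R) n : 0 <= h ->
  \sum_(i < n) fine (P (X @^-1` cell M h i)) <= 1.
Proof.
move=> h0; have mX i : measurable (X @^-1` cell M h i).
  by apply: measurable_funPTI; exact: measurable_itv.
rewrite -lee_fin -sumEFin.
under eq_bigr do rewrite -probability_fineE //.
rewrite -(measure_semi_additive (fun i => X @^-1` cell M h i)) //;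
  last exact: bigsetU_measurable.
- exact: probability_le1 (bigsetU_measurable _ _).
- apply/trivIsetP => i k _ _ ik.
  have /trivIsetP/(_ i k I I ik) cellsD := trivIset_cell M h h0.
  by rewrite -preimage_setI cellsD preimage_set0.
Qed.

Variables (G : nat -> {RV P >-> R}) (alpha : nat -> nat -> R).
Hypothesis indep : mutually_independent_seq P (fun j => G j).
Hypothesis normG : forall j, standard_normal P (G j).
Hypothesis alpha00 : alpha 0%N 0%N != 0.

Section grid.
Variables (m N : nat) (M h z eps : R).
Implicit Type dd : {ffun 'I_m.+1 -> 'I_N.+1}.

Definition grid_point dd (k : nat) : R := - M + (dd (inord k) : nat)%:R * h.

(* Freezing G_1, ..., G_(m+1) at the lower ends of their cells moves the
   quadratic form by at most [eps] (see [grid_event_cover]), hence [2 * eps]. *)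
Definition root_window dd : set R :=
  near_roots (alpha 0%N 0%N) (cross_coef alpha m.+1 (grid_point dd))
    (quad_form (fun j k => alpha j.+1 k.+1) m.+1 (grid_point dd) - z) (2 * eps).

Definition grid_box dd (i : nat) : set R :=
  if i is k.+1 then cell M h (dd (inord k)) else root_window dd.

Definition grid_event dd : set T :=
  \big[setI/setT]_(i <- iota 0 m.+2) (G i @^-1` grid_box dd i).

Lemma measurable_grid_box dd i : measurable (grid_box dd i).
Proof. by case: i => [|k] /=; [exact: measurable_near_roots | exact: measurable_itv]. Qed.

Lemma measurable_grid_event dd : measurable (grid_event dd).
Proof.
by apply: bigsetI_measurable => i _; apply: measurable_funPTI; exact: measurable_grid_box.
Qed.

Lemma grid_event_prob dd : fine (P (grid_event dd)) =
  fine (P (G 0%N @^-1` root_window dd)) *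
  \prod_(k < m.+1) fine (P (G k.+1 @^-1` cell M h (dd k))).
Proof.
have mG i : measurable (G i @^-1` grid_box dd i).
  by apply: measurable_funPTI; exact: measurable_grid_box.
have mcell i (l : nat) : measurable (G i @^-1` cell M h l).
  by apply: measurable_funPTI; exact: measurable_itv.
rewrite /grid_event indep ?iota_uniq //; last exact: measurable_grid_box.
rewrite -[iota _ _]/(0%N :: index_iota 1 m.+2) big_cons big_add1 /= big_mkord.
rewrite (eq_bigr (fun k : 'I_m.+1 => (fine (P (G k.+1 @^-1` cell M h (dd k))))%:E)).
  by rewrite prodEFin (probability_fineE (mG 0%N)) -EFinM.
by move=> k _; rewrite inord_val -probability_fineE.
Qed.

Lemma sum_grid_event_le : 0 < eps -> 0 <= h ->
  \sum_dd fine (P (grid_event dd)) <= near_roots_bound 1 (alpha 0%N 0%N) (2 * eps).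
Proof.
move=> eps0 h0; set b := near_roots_bound _ _ _.
have b0 : 0 <= b by rewrite mulr_ge0 ?sqrtr_ge0 ?mulr_ge0 ?normal_peak_ge0.
under eq_bigr do rewrite grid_event_prob.
apply: (@le_trans _ _ (\sum_(dd : {ffun 'I_m.+1 -> 'I_N.+1}) b *
    \prod_(k < m.+1) fine (P (G k.+1 @^-1` cell M h (dd k))))).
  apply: ler_sum => dd _; apply: ler_wpM2r.
    by apply: prodr_ge0 => k _; apply: fine_ge0.
  rewrite -lee_fin -probability_fineE; last first.
    by apply: measurable_funPTI; exact: measurable_near_roots.
  rewrite normG; last exact: measurable_near_roots.
  by apply: normal_prob_near_roots; rewrite ?oner_neq0 ?mulr_gt0.
rewrite -mulr_sumr -[leRHS]mulr1 ler_wpM2l //.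
rewrite -(bigA_distr_bigA
  (fun (k : 'I_m.+1) (i : 'I_N.+1) => fine (P (G k.+1 @^-1` cell M h i)))).
apply: (@le_trans _ _ (\prod_(k < m.+1) 1)); last by rewrite big1.
apply: ler_prod => k _; rewrite sumr_ge0 => [|i _]; last exact: fine_ge0.
exact: sum_prob_cell_le1.
Qed.

Lemma prob_grid_union_le : 0 < eps -> 0 <= h ->
  (P (\big[setU/set0]_dd grid_event dd) <=
    (near_roots_bound 1 (alpha 0%N 0%N) (2 * eps))%:E)%E.
Proof.
move=> eps0 h0; apply: le_trans (measure_bigsetU_le P _ _ measurable_grid_event) _.
rewrite (eq_bigr (fun dd => (fine (P (grid_event dd)))%:E)).
  by rewrite sumEFin lee_fin sum_grid_event_le.
by move=> dd _; exact: probability_fineE (measurable_grid_event dd).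
Qed.

Definition grid_index (w : T) : {ffun 'I_m.+1 -> 'I_N.+1} :=
  [ffun k : 'I_m.+1 => inord (Num.truncn ((G k.+1 w + M) / h))].

Hypotheses (h0 : 0 < h) (hN : N.+1%:R * h = 2 * M).

Lemma grid_index_cell w k : (k < m.+1)%N -> `|G k.+1 w| < M ->
  cell M h (grid_index w (inord k)) (G k.+1 w).
Proof.
move=> km Gk; have [iN ic] := cell_truncn _ _ _ _ h0 Gk hN.
by rewrite ffunE /= !inordK.
Qed.

Lemma grid_event_cover w :
  2 * M * h * (\sum_(j < m.+2) \sum_(k < m.+2) `|alpha j k|) <= eps ->
  (forall j, (j < m.+2)%N -> `|G j w| < M) ->
  `|quad_form alpha m.+2 (fun j => G j w) - z| < eps ->
  grid_event (grid_index w) w.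
Proof.
move=> hA Gw Qw; set dd := grid_index w.
have cellk k : (k < m.+1)%N -> cell M h (dd (inord k)) (G k.+1 w).
  by move=> km; exact: grid_index_cell (Gw k.+1 km).
rewrite /grid_event -bigcap_seq => -[_|k km]; last first.
  by have /[!mem_iota]/andP[_] : k.+1 \in iota 0 m.+2 := km; exact: cellk.
pose v j := if j is k.+1 then grid_point dd k else G 0%N w.
have Qv : `|quad_form alpha m.+2 (fun j => G j w) - quad_form alpha m.+2 v| <= eps.
  apply: le_trans hA; apply: quad_form_dist_le => -[|k] km /=.
    by rewrite subrr normr0 (ltW (Gw 0%N isT)) (ltW h0).
  have [gp gd] := cell_approx _ _ _ _ (ltW h0) (Gw _ km) (cellk k km).
  by split => //; exact: ltW (Gw _ km).
apply: near_rootsP => //.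
have -> : alpha 0%N 0%N * G 0%N w ^+ 2 +
    cross_coef alpha m.+1 (grid_point dd) * G 0%N w +
    (quad_form (fun j k => alpha j.+1 k.+1) m.+1 (grid_point dd) - z) =
    quad_form alpha m.+2 v - z by rewrite [quad_form alpha _ v]quad_form_recl addrA.
have := ler_distD (quad_form alpha m.+2 (fun j => G j w)) (quad_form alpha m.+2 v) z.
by rewrite distrC in Qv; lra.
Qed.

End grid.

Lemma prob_tail_union_le (n : nat) (M tau : R) :
  (normal_prob 0 1 [set x : R | (M <= `|x|)%R] <= tau%:E)%E ->
  (P (\big[setU/set0]_(j <- iota 0 n) (G j @^-1` [set x | (M <= `|x|)%R])) <=
    (n%:R * tau)%:E)%E.
Proof.
move=> tail; have mtail := measurable_normr_ge M.
apply: le_trans (measure_bigsetU_le P _ _ _) _ => [j|]; first exact: measurable_funPTI.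
rewrite (eq_bigr (fun=> normal_prob 0 1 [set x : R | (M <= `|x|)%R])); last first.
  by move=> j _; exact: normG.
apply: (@le_trans _ _ (\sum_(j <- iota 0 n) tau%:E)%E); first exact: lee_sum.
have -> : iota 0 n = index_iota 0 n by rewrite /index_iota subn0.
by rewrite sumEFin sumr_const_nat subn0 mulr_natl.
Qed.

Lemma measurable_quad_form (n : nat) :
  measurable_fun setT (fun w => quad_form alpha n (fun j => G j w)).
Proof.
apply: measurable_sum => j; apply: measurable_sum => k.
by apply: measurable_funM => //; apply: measurable_funM.
Qed.

Lemma level_prob_le (Z : {RV P >-> R}) (z eps M tau : R) (m : nat) :
  0 < eps -> 0 < M -> (normal_prob 0 1 [set x : R | (M <= `|x|)%R] <= tau%:E)%E ->
  (P (Z @^-1` [set z]) <=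
   P [set w | (eps <= `|quad_form alpha m.+2 (fun j => G j w) - Z w|)%R] +
   (m.+2%:R * tau + near_roots_bound 1 (alpha 0%N 0%N) (2 * eps))%:E)%E.
Proof.
move=> eps0 M0 tail.
have A0 : 0 <= \sum_(j < m.+2) \sum_(k < m.+2) `|alpha j k|.
  by apply: sumr_ge0 => j _; apply: sumr_ge0.
have [N [h [h0 hN hA]]] := grid_mesh _ _ _ M0 A0 eps0.
set far := [set w | _ <= _].
pose tails :=
  \big[setU/set0]_(j <- iota 0 m.+2) (G j @^-1` [set x : R | (M <= `|x|)%R]).
pose grid :=
  \big[setU/set0]_(dd : {ffun 'I_m.+1 -> 'I_N.+1}) grid_event m N M h z eps dd.
have mfar : measurable far.
  have mQZ : measurable_fun setT (fun w => quad_form alpha m.+2 (fun j => G j w) - Z w).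
    by apply: measurable_funB => //; exact: measurable_quad_form.
  by rewrite -[far]setTI; exact: mQZ measurableT _ (measurable_normr_ge eps).
have mtails : measurable tails.
  by apply: bigsetU_measurable => j _; apply: measurable_funPTI; exact: measurable_normr_ge.
have mgrid : measurable grid.
  by apply: bigsetU_measurable => dd _; exact: measurable_grid_event.
have sub : Z @^-1` [set z] `<=` far `|` (tails `|` grid).
  move=> w /= Zw.
  have [|Qw] := lerP eps `|quad_form alpha m.+2 (fun j => G j w) - Z w|;
    [by left | right].
  have [[j [jm Mj]]|Gw] := pselect (exists j, (j < m.+2)%N /\ M <= `|G j w|).
    left; rewrite /tails -bigcup_seq; exists j => //.
    by change (j \in iota 0 m.+2); rewrite mem_iota.
  right; rewrite /grid -bigcup_seq; exists (grid_index m N M h w).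
    exact: mem_index_enum.
  apply: grid_event_cover => //; last by rewrite -Zw.
  by move=> j jm; rewrite ltNge; apply/negP => Mj; apply: Gw; exists j.
have mtg : measurable (tails `|` grid) by exact: measurableU.
apply: le_trans (le_measure _ _ _ sub) _; rewrite ?inE //; first exact: measurableU.
apply: le_trans (measureU2 _ _ _) _ => //.
apply: leeD => //; rewrite EFinD; apply: le_trans (measureU2 _ _ _) _ => //.
by apply: leeD; [exact: prob_tail_union_le | exact: prob_grid_union_le (ltW h0)].
Qed.

End independent_normals.

Theorem mainTheorem13 (d : measure_display) (T : measurableType d)
  (R : realType) (P : probability T R)
  (G : nat -> {RV P >-> R}) (alpha : nat -> nat -> R) (Z : {RV P >-> R}) :
  mutually_independent_seq P (fun j => G j) ->
  (forall j, standard_normal P (G j)) ->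
  cvg_in_probability P (quad_partial alpha (fun j => G j)) Z ->
  alpha 0%N 0%N != 0 ->
  forall z : R, P (Z @^-1` [set z]) = 0%E.
Proof.
move=> indep normG conv a0 z.
apply/le_anti; rewrite measure_ge0 andbT; apply/lee_addgt0Pr => e e0; rewrite add0e.
have e30 : 0 < e / 3 by rewrite divr_gt0.
have [eps eps0 root_le] := near_roots_bound_small 1 a0 e30.
have [N _ /(_ N.+1 (leqnSn N)) Qn] := cvge0_near_le e30 (conv eps eps0).
pose m := (2 * N)%N; have m0 : 0 < m.+2%:R :> R by rewrite ltr0n.
have [M M0 tail] := probability_tail_le (normal_prob 0 1) _ (divr_gt0 e30 m0).
apply: le_trans (level_prob_le _ _ _ indep normG a0 Z z _ _ _ m eps0 M0 tail) _.
rewrite [e%:E](_ : _ = (e / 3)%:E + (e / 3 + e / 3)%:E); last first.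
  by rewrite -EFinD; congr _%:E; field.
apply: leeD.
  by move: Qn; rewrite /quad_partial mulnS add2n.
by rewrite lee_fin mulrC divfK ?gt_eqF // lerD2l.
Qed.
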